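(* Let $p$ be a prime, $s,m$ positive integers, $n=sm$, $c\in\mathbb{F}_{p^s}$, and let $F\in\mathbb{F}_{p^s}[x]$, viewed as a function $\mathbb{F}_{p^n}\to\mathbb{F}_{p^n}$, have $c$-differential uniformity $\delta_{F,c}$. Suppose that no prime $q\leq\delta_{F,c}$ divides $m$. Then for all $a,b\in\mathbb{F}_{p^s}$ (with $a\neq 0$ if $c=1$), the equation $F(x+a)-cF(x)=b$ has no solution $x\in\mathbb{F}_{p^n}\setminus\mathbb{F}_{p^s}$.
   Context: For $F:\mathbb{F}_{p^n}\to\mathbb{F}_{p^n}$ and $c\in\mathbb{F}_{p^n}$, let ${}_c\Delta_F(a,b)=\#\{x\in\mathbb{F}_{p^n}: F(x+a)-cF(x)=b\}$ and the $c$-differential uniformity is $\delta_{F,c}=\max\{{}_c\Delta_F(a,b): a,b\in\mathbb{F}_{p^n},\ a\neq 0\text{ if } c=1\}$. *)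

From mathcomp Require Import all_boot all_order all_algebra all_field.
Set Implicit Arguments. Unset Strict Implicit. Unset Printing Implicit Defensive.
Import GRing.Theory.
Local Open Scope ring_scope.

(* The subfield F_{p^s} of a finite field L of characteristic p:
   the set of roots of X^(p^s) - X in L. *)
Definition subF (L : finFieldType) (q : nat) : {set L} :=
  [set x : L | x ^+ q == x].

Definition cDelta (L : finFieldType) (F : {poly L}) (c a b : L) : nat :=
  #|[set x : L | F.[x + a] - c * F.[x] == b]|.

Definition cdu (L : finFieldType) (F : {poly L}) (c : L) : nat :=
  \max_(ab : L * L | (c != 1) || (ab.1 != 0)) cDelta F c ab.1 ab.2.

(** The map x |-> x ^+ (p ^ s) is a field automorphism fixing the coefficients
    of F and c, a, b, so it permutes the solutions of F(x + a) - c F(x) = b.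
    Its m-th iterate is x |-> x ^+ #|L| = x, so the orbit of a solution x has
    size o dividing m, and o > 1 when x lies outside F_{p^s}. As the orbit
    consists of solutions, o <= delta_{F,c}; the least prime factor of o then
    divides m and is at most delta_{F,c}. *)

From HB Require Import structures.
From mathcomp Require Import all_boot all_order all_algebra all_field.
Set Implicit Arguments.
Unset Strict Implicit.
Unset Printing Implicit Defensive.

Import GRing.Theory.
Local Open Scope ring_scope.

Section FrobeniusIter.

Variables (R : comNzRingType) (p : nat).
Hypothesis pcharRp : p \in [pchar R].

Definition pFrobenius_iter of p \in [pchar R] := fun k (x : R) => x ^+ (p ^ k).

Variable k : nat.

Lemma pnat_pchar_expn : [pchar R].-nat (p ^ k)%N.
Proof.
rewrite (eq_pnat _ (pcharf_eq pcharRp)) pnatX.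
by rewrite pnat_id ?orbT // (pcharf_prime pcharRp).
Qed.

Lemma pFrobenius_iter_is_nmod_morphism :
  nmod_morphism (pFrobenius_iter pcharRp k).
Proof.
split=> [|x y]; last exact: exprDn_pchar pnat_pchar_expn.
by rewrite /pFrobenius_iter expr0n gtn_eqF // expn_gt0 prime_gt0 ?(pcharf_prime pcharRp).
Qed.

Lemma pFrobenius_iter_is_monoid_morphism :
  monoid_morphism (pFrobenius_iter pcharRp k).
Proof. by split=> [|x y]; rewrite /pFrobenius_iter ?expr1n ?exprMn. Qed.

Lemma iter_pFrobenius_iter n x :
  iter n (pFrobenius_iter pcharRp k) x = pFrobenius_iter pcharRp (k * n) x.
Proof.
elim: n => [|n IHn]; first by rewrite /pFrobenius_iter muln0 expn0 expr1.
by rewrite iterS IHn /pFrobenius_iter -exprM -expnD mulnS addnC.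
Qed.

HB.instance Definition _ := GRing.isNmodMorphism.Build R R
  (pFrobenius_iter pcharRp k) pFrobenius_iter_is_nmod_morphism.
HB.instance Definition _ := GRing.isMonoidMorphism.Build R R
  (pFrobenius_iter pcharRp k) pFrobenius_iter_is_monoid_morphism.

End FrobeniusIter.

Section OrbitOrder.

Variables (T : finType) (f : T -> T).

Lemma order_le_card (A : {pred T}) x :
  x \in A -> {homo f : y / y \in A} -> (order f x <= #|A|)%N.
Proof.
move=> Ax fA; rewrite -size_orbit -(card_uniqP (orbit_uniq f x)).
apply/subset_leq_card/subsetP => y; rewrite -fconnect_orbit => /iter_findex <-.
by elim: (findex f x _) => //= n IHn; apply: fA.
Qed.

Hypothesis injf : injective f.

Lemma order_dvdn_iter n x : iter n f x = x -> (order f x %| n)%N.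
Proof.
move=> fnx; have o_gt0 := order_gt0 f x.
have iter_mul_order q : iter (q * order f x) f x = x.
  by elim: q => // q IHq; rewrite mulSn iterD IHq iter_order.
have : iter (n %% order f x) f x = x.
  by rewrite -[in RHS]fnx {2}(divn_eq n (order f x)) addnC iterD iter_mul_order.
move/(congr1 (findex f x)); rewrite findex0 findex_iter ?ltn_pmod //.
by move/eqP.
Qed.

Lemma order_gt1 x : f x != x -> (1 < order f x)%N.
Proof.
move=> fx; rewrite ltn_neqAle order_gt0 andbT eq_sym; apply: contra fx => /eqP o1.
by rewrite -[f x]/(iter 1 f x) -o1 iter_order.
Qed.

End OrbitOrder.

Section CDifferentialEquation.

Variables (R : comNzRingType) (g : {rmorphism R -> R}) (F : {poly R}) (c a : R).
Hypotheses (gF : forall i, g F`_i = F`_i) (gc : g c = c) (ga : g a = a).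

Lemma cdiff_rmorph x : F.[g x + a] - c * F.[g x] = g (F.[x + a] - c * F.[x]).
Proof.
have gFF : map_poly g F = F by apply/polyP => i; rewrite coef_map; apply: gF.
by rewrite rmorphB rmorphM -!horner_map gFF rmorphD ga gc.
Qed.

End CDifferentialEquation.

Lemma order_le_cDelta (L : finFieldType) (g : {rmorphism L -> L}) (F : {poly L})
    (c a b x : L) :
  (forall i, g F`_i = F`_i) -> g c = c -> g a = a -> g b = b ->
  F.[x + a] - c * F.[x] = b -> (order g x <= cDelta F c a b)%N.
Proof.
move=> gF gc ga gb Px; apply: order_le_card; first by rewrite inE Px.
by move=> y; rewrite !inE cdiff_rmorph // => /eqP ->; rewrite gb.
Qed.

Lemma cDelta_le_cdu (L : finFieldType) (F : {poly L}) (c a b : L) :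
  (c != 1) || (a != 0) -> (cDelta F c a b <= cdu F c)%N.
Proof. exact: (leq_bigmax_cond (a, b)). Qed.

Theorem proposition2p4 (p s m : nat) (L : finFieldType)
  (hp : prime p) (hchar : p \in [pchar L]) (hs : (0 < s)%N) (hm : (0 < m)%N)
  (hcard : #|L| = (p ^ (s * m))%N)
  (F : {poly L}) (hF : forall i, F`_i \in subF L (p ^ s))
  (c : L) (hc : c \in subF L (p ^ s))
  (hq : forall q : nat, prime q -> (q <= cdu F c)%N -> ~~ (q %| m)%N) :
  forall a b : L, a \in subF L (p ^ s) -> b \in subF L (p ^ s) ->
    (c = 1 -> a != 0) ->
    forall x : L, x \notin subF L (p ^ s) -> F.[x + a] - c * F.[x] != b.
Proof.
move=> a b ha hb hca x hx; apply/eqP => Px.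
pose f : {rmorphism L -> L} := pFrobenius_iter hchar s.
have fixed z : z \in subF L (p ^ s) -> f z = z by rewrite inE => /eqP.
have o_le : (order f x <= cdu F c)%N.
  have o_le_cDelta : (order f x <= cDelta F c a b)%N.
    by apply: (order_le_cDelta (g := f)) Px => [i|||]; apply: fixed.
  apply: leq_trans o_le_cDelta _; apply: cDelta_le_cdu.
  by case: (eqVneq c 1) => //= /hca.
have o_dvd : (order f x %| m)%N.
  apply: (order_dvdn_iter (fmorph_inj f)).
  by rewrite /f /= iter_pFrobenius_iter /pFrobenius_iter -hcard expf_card.
have o_gt1 : (1 < order f x)%N by apply: (order_gt1 (fmorph_inj f)); rewrite inE in hx.
have := hq _ (pdiv_prime o_gt1) (leq_trans (pdiv_leq (order_gt0 f x)) o_le).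
by rewrite (dvdn_trans (pdiv_dvd _) o_dvd).
Qed.
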